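(* Let $\mu,\nu\in\mathbb{R}$ and $\sigma\in\mathbb{R}\setminus\{0\}$. On smooth functions $\Phi(x,t)$ on $\mathbb{R}^2$ define $$P=\partial_x,\quad H=\partial_t,\quad K=-\nu t\,\frac{e^{\sigma\partial_x}-1}{\sigma}-\mu x\,e^{-\sigma\partial_x}\partial_t,\quad D=-x\,\frac{1-e^{-\sigma\partial_x}}{\sigma}-t\partial_t,$$ $$C_1=(\mu x^2e^{-2\sigma\partial_x}+\nu t^2)\partial_t+2\nu xt\,\frac{1-e^{-\sigma\partial_x}}{\sigma}-\sigma\mu x\,e^{-2\sigma\partial_x}\partial_t,$$ $$C_2=-(\mu x^2e^{-\sigma\partial_x}+\nu t^2)\frac{e^{\sigma\partial_x}-1}{\sigma}-2\mu xt\,\partial_t-\sigma\mu(t\partial_t+t^2\partial_t^2),$$ where $e^{a\partial_x}$ is the shift $\Phi(x,t)\mapsto\Phi(x+a,t)$ and $x,t$ denote multiplication operators. Then these operators satisfy the relations $[K,H]=\nu\frac{e^{\sigma P}-1}{\sigma}$, $[K,P]=\mu e^{-\sigma P}H$, $[H,P]=0$, $[K,D]=0$, $[D,H]=H$, $[D,C_1]=-C_1$, $[H,C_1]=-2\nu D$, $[D,P]=\frac{1-e^{-\sigma P}}{\sigma}$, $[D,C_2]=-C_2-\sigma\mu D^2$, $[P,C_2]=2\mu D$, $[K,C_1]=\nu C_2+\sigma\mu\nu D^2$, $[K,C_2]=\mu C_1$, $[P,C_1]=-e^{-\sigma P}K-Ke^{-\sigma P}$, $[H,C_2]=2K+\sigma\mu(DH+HD)$,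 $[C_1,C_2]=-\sigma\mu(DC_1+C_1D)$. Moreover, with $$E_\sigma=\nu\Big(\frac{e^{\sigma\partial_x}-1}{\sigma}\Big)^2-\mu\,\partial_t^2,$$ one has $[E_\sigma,X]=0$ for $X\in\{K,P,H\}$, $[E_\sigma,D]=-2E_\sigma$, $[E_\sigma,C_1]=4\nu t\,E_\sigma$ and $[E_\sigma,C_2]=-4\mu(x+\sigma+\sigma t\partial_t)E_\sigma$. In particular each of these operators maps solutions of $E_\sigma\Phi=0$ to solutions. *)

From Stdlib Require Import Reals List.
From Coquelicot Require Import Coquelicot.
Open Scope R_scope.

Definition Fun2 := R -> R -> R.
Definition Op := Fun2 -> Fun2.

Definition dX : Op := fun f x t => Derive (fun y => f y t) x.
Definition dT : Op := fun f x t => Derive (fun s => f x s) t.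

Fixpoint iterD (w : list bool) (f : Fun2) : Fun2 :=
  match w with
  | nil => f
  | b :: w' => (if b then dX else dT) (iterD w' f)
  end.

Definition smooth (f : Fun2) : Prop :=
  forall w : list bool, forall x t : R,
    ex_derive (fun y => iterD w f y t) x /\
    ex_derive (fun s => iterD w f x s) t /\
    continuous (fun p : R * R => iterD w f (fst p) (snd p)) (x, t).

Definition idOp : Op := fun f => f.
Definition opadd (A B : Op) : Op := fun f x t => A f x t + B f x t.
Definition opsub (A B : Op) : Op := fun f x t => A f x t - B f x t.
Definition opscal (c : R) (A : Op) : Op := fun f x t => c * A f x t.
Definition opcomp (A B : Op) : Op := fun f => A (B f).
Definition comm (A B : Op) : Op := opsub (opcomp A B) (opcomp B A).

Definition mulX : Op := fun f x t => x * f x t.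
Definition mulT : Op := fun f x t => t * f x t.
Definition shift (a : R) : Op := fun f x t => f (x + a) t.

Section Ops.
Variables (mu nu sigma : R).

Definition DeltaP : Op := opscal (/ sigma) (opsub (shift sigma) idOp).
Definition DeltaM : Op := opscal (/ sigma) (opsub idOp (shift (- sigma))).

Definition Pop : Op := dX.
Definition Hop : Op := dT.

Definition Kop : Op :=
  opsub (opscal (- nu) (opcomp mulT DeltaP))
        (opscal mu (opcomp mulX (opcomp (shift (- sigma)) dT))).

Definition Dop : Op :=
  opsub (opscal (-1) (opcomp mulX DeltaM)) (opcomp mulT dT).

Definition C1op : Op :=
  opsub
    (opadd
      (opcomp (opadd (opscal mu (opcomp mulX (opcomp mulX (shift (-2 * sigma)))))
                     (opscal nu (opcomp mulT mulT))) dT)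
      (opscal (2 * nu) (opcomp mulX (opcomp mulT DeltaM))))
    (opscal (sigma * mu) (opcomp mulX (opcomp (shift (-2 * sigma)) dT))).

Definition C2op : Op :=
  opsub
    (opsub
      (opscal (-1)
        (opcomp (opadd (opscal mu (opcomp mulX (opcomp mulX (shift (- sigma)))))
                       (opscal nu (opcomp mulT mulT))) DeltaP))
      (opscal (2 * mu) (opcomp mulX (opcomp mulT dT))))
    (opscal (sigma * mu)
      (opadd (opcomp mulT dT) (opcomp mulT (opcomp mulT (opcomp dT dT))))).

Definition Eop : Op :=
  opsub (opscal nu (opcomp DeltaP DeltaP)) (opscal mu (opcomp dT dT)).

End Ops.

(* Every operator of the statement is built from multiplication by x and t, the shifts
   e^{k sigma d_x} (k an integer) and d_x, d_t.  Such an operator maps a finite sum of terms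
   p(x,t) * d_x^m d_t^n Phi(x + k sigma, t), p a polynomial, to another such sum: the
   product rule differentiates the coefficients, a shift substitutes x + k sigma into p, and
   Schwarz's theorem lets d_t pass through d_x.  Applied to Phi, both sides of each relation
   become explicit sums over the same atoms d_x^m d_t^n Phi(x + k sigma, t), and the relation
   reduces to a rational identity in mu, nu, sigma, x, t.  For the last claim,
   E (X Phi) = [E, X] Phi + X (E Phi) and every [E, X] has the form Y E. *)

From Stdlib Require Import Reals Lra List FunctionalExtensionality.
From Coquelicot Require Import Coquelicot.
Open Scope R_scope.
(* Coquelicot loads ssreflect, which switches bullet checking off. *)
Set Bullet Behavior "Strict Subproofs".

Lemma fun2_ext (f g : Fun2) : (forall x t, f x t = g x t) -> f = g.
Proof.
  intros Hfg. apply functional_extensionality; intro x.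
  apply functional_extensionality; intro t. apply Hfg.
Qed.

Lemma iterD_app (w1 w2 : list bool) (f : Fun2) :
  iterD w1 (iterD w2 f) = iterD (w1 ++ w2) f.
Proof. induction w1 as [|b w1 IH]; simpl; [reflexivity | now rewrite IH]. Qed.

Lemma smooth_iterD (w : list bool) (f : Fun2) : smooth f -> smooth (iterD w f).
Proof. intros Hf w' x t. rewrite iterD_app. apply Hf. Qed.

Lemma dX_dT (f : Fun2) : smooth f -> dX (dT f) = dT (dX f).
Proof.
  intros Hf. apply fun2_ext. intros x t.
  apply (Schwarz f x t).
  - apply locally_2d_forall. intros u v.
    repeat split.
    + exact (proj1 (Hf nil u v)).
    + exact (proj1 (proj2 (Hf nil u v))).
    + exact (proj1 (Hf (false :: nil) u v)).
    + exact (proj1 (proj2 (Hf (true :: nil) u v))).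
  - apply continuity_2d_pt_filterlim. exact (proj2 (proj2 (Hf (true :: false :: nil) x t))).
  - apply continuity_2d_pt_filterlim. exact (proj2 (proj2 (Hf (false :: true :: nil) x t))).
Qed.

Definition pderiv (m n : nat) (f : Fun2) : Fun2 := Nat.iter m dX (Nat.iter n dT f).
(* The values of [pderiv m n Phi] are the atoms of the normal forms below; [simpl] must not
   unfold them into limits. *)
Arguments pderiv : simpl never.

Lemma iter_iterD (b : bool) (k : nat) (f : Fun2) :
  Nat.iter k (if b then dX else dT) f = iterD (repeat b k) f.
Proof. induction k as [|k IH]; simpl; [reflexivity | now rewrite IH]. Qed.

Lemma smooth_pderiv (m n : nat) (f : Fun2) : smooth f -> smooth (pderiv m n f).
Proof.
  intros Hf. unfold pderiv.
  rewrite (iter_iterD true), (iter_iterD false).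
  now apply smooth_iterD, smooth_iterD.
Qed.

Lemma dX_pderiv (m n : nat) (f : Fun2) : dX (pderiv m n f) = pderiv (S m) n f.
Proof. reflexivity. Qed.

Lemma dT_pderiv (m n : nat) (f : Fun2) :
  smooth f -> dT (pderiv m n f) = pderiv m (S n) f.
Proof.
  intros Hf. induction m as [|m IH]; [reflexivity|].
  change (dT (dX (pderiv m n f)) = dX (pderiv m (S n) f)).
  rewrite <- IH, dX_dT; [reflexivity|].
  now apply smooth_pderiv.
Qed.

Lemma is_derive_pderiv_X (m n : nat) (f : Fun2) (x t : R) : smooth f ->
  is_derive (fun y => pderiv m n f y t) x (pderiv (S m) n f x t).
Proof.
  intros Hf. rewrite <- dX_pderiv. apply Derive_correct.
  exact (proj1 (smooth_pderiv m n f Hf nil x t)).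
Qed.

Lemma is_derive_pderiv_T (m n : nat) (f : Fun2) (x t : R) : smooth f ->
  is_derive (fun s => pderiv m n f x s) t (pderiv m (S n) f x t).
Proof.
  intros Hf. rewrite <- (dT_pderiv m n f Hf). apply Derive_correct.
  exact (proj1 (proj2 (smooth_pderiv m n f Hf nil x t))).
Qed.

Lemma is_derive_Rplus (f g : R -> R) (x df dg : R) :
  is_derive f x df -> is_derive g x dg -> is_derive (fun y => f y + g y) x (df + dg).
Proof. exact (is_derive_plus (V := R_NormedModule) f g x df dg). Qed.

Lemma is_derive_Rmult (f g : R -> R) (x df dg : R) :
  is_derive f x df -> is_derive g x dg ->
  is_derive (fun y => f y * g y) x (df * g x + f x * dg).
Proof. intros Hf Hg. exact (is_derive_mult (K := R_AbsRing) f g x df dg Hf Hg Rmult_comm). Qed.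

Lemma is_derive_translate (f : R -> R) (x a l : R) :
  is_derive f (x + a) l -> is_derive (fun y => f (y + a)) x l.
Proof.
  intros Hf. rewrite <- (Rmult_1_l l).
  apply (is_derive_comp f (fun y => y + a)); [exact Hf|].
  auto_derive; [exact I | ring].
Qed.

Inductive poly2 :=
  | PConst (c : R) | PVarX | PVarT | PAdd (p q : poly2) | PMul (p q : poly2).

Fixpoint peval (p : poly2) (x t : R) : R :=
  match p with
  | PConst c => c
  | PVarX => x
  | PVarT => t
  | PAdd p q => peval p x t + peval q x t
  | PMul p q => peval p x t * peval q x t
  end.

Fixpoint pderX (p : poly2) : poly2 :=
  match p with
  | PConst _ | PVarT => PConst 0
  | PVarX => PConst 1
  | PAdd p q => PAdd (pderX p) (pderX q)
  | PMul p q => PAdd (PMul (pderX p) q) (PMul p (pderX q))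
  end.

Fixpoint pderT (p : poly2) : poly2 :=
  match p with
  | PConst _ | PVarX => PConst 0
  | PVarT => PConst 1
  | PAdd p q => PAdd (pderT p) (pderT q)
  | PMul p q => PAdd (PMul (pderT p) q) (PMul p (pderT q))
  end.

Fixpoint pshift (a : R) (p : poly2) : poly2 :=
  match p with
  | PVarX => PAdd PVarX (PConst a)
  | PAdd p q => PAdd (pshift a p) (pshift a q)
  | PMul p q => PMul (pshift a p) (pshift a q)
  | _ => p
  end.

Lemma peval_pshift (a : R) (p : poly2) (x t : R) :
  peval (pshift a p) x t = peval p (x + a) t.
Proof. induction p; simpl; congruence. Qed.

Lemma is_derive_peval_X (p : poly2) (x t : R) :
  is_derive (fun y => peval p y t) x (peval (pderX p) x t).
Proof.
  induction p; simpl.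
  - exact (is_derive_const _ _).
  - exact (is_derive_id _).
  - exact (is_derive_const _ _).
  - exact (is_derive_Rplus _ _ _ _ _ IHp1 IHp2).
  - exact (is_derive_Rmult _ _ _ _ _ IHp1 IHp2).
Qed.

Lemma is_derive_peval_T (p : poly2) (x t : R) :
  is_derive (fun s => peval p x s) t (peval (pderT p) x t).
Proof.
  induction p; simpl.
  - exact (is_derive_const _ _).
  - exact (is_derive_const _ _).
  - exact (is_derive_id _).
  - exact (is_derive_Rplus _ _ _ _ _ IHp1 IHp2).
  - exact (is_derive_Rmult _ _ _ _ _ IHp1 IHp2).
Qed.

(* A term stands for [coef (x, t) * pderiv orderX orderT Phi (x + shift_index * s) t].  Shifts
   are integer multiples of [s] so that composing shifts adds the indices by computation, and
   equal atoms become syntactically equal for [field]. *)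
Record term := Term { coef : poly2; shift_index : Z; orderX : nat; orderT : nat }.

Definition map_coef (f : poly2 -> poly2) (u : term) : term :=
  Term (f (coef u)) (shift_index u) (orderX u) (orderT u).

Definition nf_scale (c : R) : list term -> list term := map (map_coef (PMul (PConst c))).
Definition nf_mulX : list term -> list term := map (map_coef (PMul PVarX)).
Definition nf_mulT : list term -> list term := map (map_coef (PMul PVarT)).

Definition nf_dX : list term -> list term :=
  flat_map (fun u => map_coef pderX u
                     :: Term (coef u) (shift_index u) (S (orderX u)) (orderT u) :: nil).
Definition nf_dT : list term -> list term :=
  flat_map (fun u => map_coef pderT u
                     :: Term (coef u) (shift_index u) (orderX u) (S (orderT u)) :: nil).

Section NormalForm.

Variables (Phi : Fun2) (s : R).

Definition nf_shift (j : Z) : list term -> list term :=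
  map (fun u => Term (pshift (IZR j * s) (coef u)) (shift_index u + j) (orderX u) (orderT u)).

Fixpoint nf_eval (l : list term) : Fun2 :=
  match l with
  | nil => fun _ _ => 0
  | u :: l => fun x t =>
      peval (coef u) x t * pderiv (orderX u) (orderT u) Phi (x + IZR (shift_index u) * s) t
      + nf_eval l x t
  end.

Lemma nf_eval_app (l1 l2 : list term) (x t : R) :
  nf_eval (l1 ++ l2) x t = nf_eval l1 x t + nf_eval l2 x t.
Proof. induction l1 as [|u l IH]; simpl; [ring | rewrite IH; ring]. Qed.

Lemma nf_eval_scale (c : R) (l : list term) (x t : R) :
  nf_eval (nf_scale c l) x t = c * nf_eval l x t.
Proof. induction l as [|u l IH]; simpl in *; [ring | rewrite IH; ring]. Qed.

Lemma nf_eval_mulX (l : list term) (x t : R) : nf_eval (nf_mulX l) x t = x * nf_eval l x t.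
Proof. induction l as [|u l IH]; simpl in *; [ring | rewrite IH; ring]. Qed.

Lemma nf_eval_mulT (l : list term) (x t : R) : nf_eval (nf_mulT l) x t = t * nf_eval l x t.
Proof. induction l as [|u l IH]; simpl in *; [ring | rewrite IH; ring]. Qed.

Lemma nf_eval_shift (j : Z) (l : list term) (x t : R) :
  nf_eval (nf_shift j l) x t = nf_eval l (x + IZR j * s) t.
Proof.
  induction l as [|u l IH]; simpl in *; [reflexivity|].
  rewrite IH, peval_pshift, plus_IZR.
  replace (x + (IZR (shift_index u) + IZR j) * s)
    with (x + IZR j * s + IZR (shift_index u) * s) by ring.
  reflexivity.
Qed.

Hypothesis Phi_smooth : smooth Phi.

Lemma is_derive_nf_dX (l : list term) (x t : R) :
  is_derive (fun y => nf_eval l y t) x (nf_eval (nf_dX l) x t).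
Proof.
  induction l as [|u l IH]; simpl.
  - exact (is_derive_const _ _).
  - rewrite <- Rplus_assoc. refine (is_derive_Rplus _ _ _ _ _ _ IH).
    refine (is_derive_Rmult _ _ _ _ _ (is_derive_peval_X _ _ _) _).
    apply (is_derive_translate (fun y => pderiv (orderX u) (orderT u) Phi y t)).
    exact (is_derive_pderiv_X _ _ _ _ _ Phi_smooth).
Qed.

Lemma is_derive_nf_dT (l : list term) (x t : R) :
  is_derive (fun s => nf_eval l x s) t (nf_eval (nf_dT l) x t).
Proof.
  induction l as [|u l IH]; simpl.
  - exact (is_derive_const _ _).
  - rewrite <- Rplus_assoc. refine (is_derive_Rplus _ _ _ _ _ _ IH).
    refine (is_derive_Rmult _ _ _ _ _ (is_derive_peval_T _ _ _) _).
    exact (is_derive_pderiv_T _ _ _ _ _ Phi_smooth).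
Qed.

Definition represents (A : Op) (a : list term -> list term) : Prop :=
  forall l, A (nf_eval l) = nf_eval (a l).

Lemma represents_id : represents idOp (fun l => l).
Proof. intros l. reflexivity. Qed.

Lemma represents_add (A B : Op) a b : represents A a -> represents B b ->
  represents (opadd A B) (fun l => a l ++ b l).
Proof.
  intros HA HB l. unfold opadd. rewrite HA, HB.
  apply fun2_ext. intros x t. now rewrite nf_eval_app.
Qed.

Lemma represents_sub (A B : Op) a b : represents A a -> represents B b ->
  represents (opsub A B) (fun l => a l ++ nf_scale (-1) (b l)).
Proof.
  intros HA HB l. unfold opsub. rewrite HA, HB.
  apply fun2_ext. intros x t. rewrite nf_eval_app, nf_eval_scale. ring.
Qed.

Lemma represents_scal (c : R) (A : Op) a : represents A a ->
  represents (opscal c A) (fun l => nf_scale c (a l)).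
Proof.
  intros HA l. unfold opscal. rewrite HA.
  apply fun2_ext. intros x t. now rewrite nf_eval_scale.
Qed.

Lemma represents_comp (A B : Op) a b : represents A a -> represents B b ->
  represents (opcomp A B) (fun l => a (b l)).
Proof. intros HA HB l. unfold opcomp. now rewrite HB, HA. Qed.

Lemma represents_mulX : represents mulX nf_mulX.
Proof. intros l. apply fun2_ext. intros x t. now rewrite nf_eval_mulX. Qed.

Lemma represents_mulT : represents mulT nf_mulT.
Proof. intros l. apply fun2_ext. intros x t. now rewrite nf_eval_mulT. Qed.

Lemma represents_shift (a : R) (j : Z) : a = IZR j * s -> represents (shift a) (nf_shift j).
Proof. intros -> l. apply fun2_ext. intros x t. now rewrite nf_eval_shift. Qed.

Lemma represents_dX : represents dX nf_dX.
Proof. intros l. apply fun2_ext. intros x t. apply is_derive_unique, is_derive_nf_dX. Qed.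

Lemma represents_dT : represents dT nf_dT.
Proof. intros l. apply fun2_ext. intros x t. apply is_derive_unique, is_derive_nf_dT. Qed.

Definition nf_Phi : list term := Term (PConst 1) 0 0 0 :: nil.

Lemma nf_eval_Phi : nf_eval nf_Phi = Phi.
Proof.
  apply fun2_ext. intros x t. simpl.
  replace (x + 0 * s) with x by ring. unfold pderiv; simpl. ring.
Qed.

Lemma eq_by_normal_form (A B : Op) a b : represents A a -> represents B b ->
  (forall x t, nf_eval (a nf_Phi) x t = nf_eval (b nf_Phi) x t) -> A Phi = B Phi.
Proof.
  intros HA HB Hab. rewrite <- nf_eval_Phi, HA, HB.
  now apply fun2_ext.
Qed.

Lemma eq0_by_normal_form (A : Op) a : represents A a ->
  (forall x t, nf_eval (a nf_Phi) x t = 0) -> A Phi = (fun _ _ => 0).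
Proof.
  intros HA Ha. rewrite <- nf_eval_Phi, HA.
  now apply fun2_ext.
Qed.

Lemma represents_maps_zero (A : Op) a : represents A a -> a nil = nil ->
  A (fun _ _ => 0) = (fun _ _ => 0).
Proof. intros HA Ha. change (fun _ _ : R => 0) with (nf_eval nil). now rewrite HA, Ha. Qed.

End NormalForm.

Lemma kernel_preserved_of_comm (E X Y : Op) (Phi : Fun2) :
  comm E X Phi = Y (E Phi) -> E Phi = (fun _ _ => 0) ->
  X (fun _ _ => 0) = (fun _ _ => 0) -> Y (fun _ _ => 0) = (fun _ _ => 0) ->
  E (X Phi) = (fun _ _ => 0).
Proof.
  intros HEX HE HX HY. apply fun2_ext. intros x t.
  assert (Hxt := f_equal (fun f => f x t) HEX).
  unfold comm, opsub, opcomp in Hxt. rewrite HE, HX, HY in Hxt. simpl in Hxt. lra.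
Qed.

Ltac shift_multiple s a :=
  lazymatch a with
  | s => constr:(1%Z)
  | - s => constr:((-1)%Z)
  | IZR ?k * s => k
  end.

Ltac represent Hs :=
  repeat lazymatch goal with
  | |- represents _ _ idOp _ => apply represents_id
  | |- represents _ _ (opadd _ _) _ => apply represents_add
  | |- represents _ _ (opsub _ _) _ => apply represents_sub
  | |- represents _ _ (opscal _ _) _ => apply represents_scal
  | |- represents _ _ (opcomp _ _) _ => apply represents_comp
  | |- represents _ _ mulX _ => apply represents_mulX
  | |- represents _ _ mulT _ => apply represents_mulT
  | |- represents _ ?s (shift ?a) _ =>
      let j := shift_multiple s a in apply (represents_shift _ _ a j); ring
  | |- represents _ _ dX _ => apply (represents_dX _ _ Hs)
  | |- represents _ _ dT _ => apply (represents_dT _ _ Hs)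
  | |- represents _ _ _ _ =>
      progress unfold comm, Pop, Hop, Kop, Dop, C1op, C2op, Eop, DeltaP, DeltaM
  end.

Ltac normal_form_identity Hs hs :=
  let s := match type of hs with ?s <> 0 => s end in
  first [ eapply (eq0_by_normal_form _ s);
            [represent Hs | intros ?x ?t; simpl; field; exact hs]
        | eapply (eq_by_normal_form _ s);
            [represent Hs | represent Hs | intros ?x ?t; simpl; field; exact hs] ].

Ltac maps_zero Hs hs :=
  let Phi := match type of Hs with smooth ?Phi => Phi end in
  let s := match type of hs with ?s <> 0 => s end in
  eapply (represents_maps_zero Phi s); [represent Hs | reflexivity].

Theorem mainTheorem5 (mu nu sigma : R) (hsigma : sigma <> 0) :
  let P := Pop in
  let H := Hop in
  let K := Kop mu nu sigma in
  let D := Dop sigma in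
  let C1 := C1op mu nu sigma in
  let C2 := C2op mu nu sigma in
  let E := Eop mu nu sigma in
  let emP := shift (- sigma) in
  (forall Phi : Fun2, smooth Phi ->
     comm K H Phi = opscal nu (DeltaP sigma) Phi /\
     comm K P Phi = opscal mu (opcomp emP H) Phi /\
     comm H P Phi = (fun _ _ => 0) /\
     comm K D Phi = (fun _ _ => 0) /\
     comm D H Phi = H Phi /\
     comm D C1 Phi = opscal (-1) C1 Phi /\
     comm H C1 Phi = opscal (-2 * nu) D Phi /\
     comm D P Phi = DeltaM sigma Phi /\
     comm D C2 Phi = opsub (opscal (-1) C2) (opscal (sigma * mu) (opcomp D D)) Phi /\
     comm P C2 Phi = opscal (2 * mu) D Phi /\
     comm K C1 Phi = opadd (opscal nu C2) (opscal (sigma * mu * nu) (opcomp D D)) Phi /\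
     comm K C2 Phi = opscal mu C1 Phi /\
     comm P C1 Phi = opsub (opscal (-1) (opcomp emP K)) (opcomp K emP) Phi /\
     comm H C2 Phi = opadd (opscal 2 K)
                       (opscal (sigma * mu) (opadd (opcomp D H) (opcomp H D))) Phi /\
     comm C1 C2 Phi = opscal (- (sigma * mu)) (opadd (opcomp D C1) (opcomp C1 D)) Phi /\
     comm E K Phi = (fun _ _ => 0) /\
     comm E P Phi = (fun _ _ => 0) /\
     comm E H Phi = (fun _ _ => 0) /\
     comm E D Phi = opscal (-2) E Phi /\
     comm E C1 Phi = opscal (4 * nu) (opcomp mulT E) Phi /\
     comm E C2 Phi =
       opscal (-4 * mu)
         (opcomp (opadd (opadd mulX (opscal sigma idOp))
                        (opscal sigma (opcomp mulT dT))) E) Phi) /\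
  (forall Phi : Fun2, smooth Phi -> E Phi = (fun _ _ => 0) ->
     forall X : Op, In X (K :: P :: H :: D :: C1 :: C2 :: nil) ->
       E (X Phi) = (fun _ _ => 0)).
Proof.
  cbv zeta.
  match goal with |- ?relations /\ _ => assert (rels : relations) end.
  { intros Phi Hs. repeat split; normal_form_identity Hs hsigma. }
  split; [exact rels|].
  intros Phi Hs HE X HX.
  destruct (rels Phi Hs) as (_&_&_&_&_&_&_&_&_&_&_&_&_&_&_& EK & EP & EH & ED & EC1 & EC2).
  simpl in HX; destruct HX as [<-|[<-|[<-|[<-|[<-|[<-|[]]]]]]];
    [ apply (kernel_preserved_of_comm _ _ (fun _ _ _ => 0) _ EK)
    | apply (kernel_preserved_of_comm _ _ (fun _ _ _ => 0) _ EP)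
    | apply (kernel_preserved_of_comm _ _ (fun _ _ _ => 0) _ EH)
    | apply (kernel_preserved_of_comm _ _ (opscal (-2) idOp) _ ED)
    | apply (kernel_preserved_of_comm _ _ (opscal (4 * nu) mulT) _ EC1)
    | apply (kernel_preserved_of_comm _ _
        (opscal (-4 * mu) (opadd (opadd mulX (opscal sigma idOp))
                                 (opscal sigma (opcomp mulT dT)))) _ EC2) ];
    solve [exact HE | reflexivity | maps_zero Hs hsigma].
Qed.
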